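(* Let $n\ge 0$, let $T$ be a triangulation of a regular polygon with $n+3$ vertices, let $\alpha,\alpha'$ be positive roots and write $S=\operatorname{Supp}\alpha$, $S'=\operatorname{Supp}\alpha'$. The following are equivalent: (A) there exists $i\in S\cap S'$ such that, denoting by $v_1,v_2$ the endpoints of $-\alpha_i$ and by $u_1,u_2$ (resp. $u_1',u_2'$) the endpoints of $\alpha$ (resp. $\alpha'$), and ordering the vertices counterclockwise starting at $v_1$ (for a suitable choice of labelling of the endpoints), one has $v_1<u_1\le u_1'<v_2<u_2\le u_2'$; (B) $S\cap S'\neq\emptyset$, there is no arrow in ${Q}_T$ from $S\setminus S'$ to $S\cap S'$, and there is no arrow in ${Q}_T$ from $S\cap S'$ to $S'\setminus S$.
   Context: Diagonals of the polygon are called roots; those in $T$ are negative roots, indexed by a set $I$ (the one indexed by $i$ written $-\alpha_i$), and the others positive roots. $\operatorname{Supp}\alpha$ is the set of $i\in I$ with $-\alpha_i$ crossing $\alpha$. If $-\alpha_i,-\alpha_j$ bound a common triangle of $T$ with common vertex $x$, set $-\alpha_i<-\alpha_j$ if the minimal-angle rotation about $x$ sending the line through $-\alpha_i$ to that through $-\alpha_j$ is counterclockwise. ${Q}_T$ has vertex set $I$ and an arrow $j\to i$ whenever $-\alpha_i,-\alpha_j$ bound a common triangle and $-\alpha_i<-\alpha_j$. *)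

From mathcomp Require Import all_boot.
Set Implicit Arguments. Unset Strict Implicit. Unset Printing Implicit Defensive.

Section Polygon.
Variable N : nat.
(* Vertices of the polygon are 'I_N, labelled 0,1,...,N-1 counterclockwise. *)

Definition cyc (v x : 'I_N) : nat := (x + N - v) %% N.

Definition adjacent (a b : 'I_N) : Prop := cyc a b = 1 \/ cyc b a = 1.

Definition is_diag (d : {set 'I_N}) : Prop :=
  exists a b : 'I_N, a != b /\ ~ adjacent a b /\ d = [set a; b].

Definition cross (d e : {set 'I_N}) : bool :=
  [exists a : 'I_N, exists c : 'I_N, exists b : 'I_N, exists f : 'I_N,
    [&& a < c, c < b, b < f &
      ((d == [set a; b]) && (e == [set c; f])) ||
      ((d == [set c; f]) && (e == [set a; b]))]].

Definition triangulation (T : {set {set 'I_N}}) : Prop :=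
  (forall d, d \in T -> is_diag d) /\
  (forall d e, d \in T -> e \in T -> ~ cross d e) /\
  (forall d, is_diag d -> d \notin T -> exists2 e, e \in T & cross d e).

(* positive root: a diagonal not in T (negative roots are the elements of T;
   the index set I is taken to be T itself) *)
Definition positive_root (T : {set {set 'I_N}}) (al : {set 'I_N}) : Prop :=
  is_diag al /\ al \notin T.

Definition Supp (T : {set {set 'I_N}}) (al : {set 'I_N}) : {set {set 'I_N}} :=
  [set i in T | cross i al].

Definition side_or_in (T : {set {set 'I_N}}) (a b : 'I_N) : Prop :=
  adjacent a b \/ [set a; b] \in T.

Definition triangle_of (T : {set {set 'I_N}}) (x y z : 'I_N) : Prop :=
  [/\ x != y, y != z & x != z] /\
  [/\ side_or_in T x y, side_or_in T y z & side_or_in T x z].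

(* arrow j -> i in Q_T: -alpha_i, -alpha_j bound a common triangle of T with
   common vertex x, and the rotation about x (through the interior angle of
   the triangle) from -alpha_i to -alpha_j is counterclockwise, i.e. the
   other endpoint of -alpha_i comes before that of -alpha_j counterclockwise
   from x. *)
Definition arrow (T : {set {set 'I_N}}) (j i : {set 'I_N}) : Prop :=
  i \in T /\ j \in T /\
  exists x y z : 'I_N, triangle_of T x y z /\
    i = [set x; y] /\ j = [set x; z] /\ cyc x y < cyc x z.

End Polygon.

From mathcomp Require Import all_boot zify.
Set Implicit Arguments. Unset Strict Implicit. Unset Printing Implicit Defensive.

(* Measure positions counterclockwise from an endpoint v1 of a diagonal
   [v1; v2] of T crossed by both alpha and alpha'.
   (B) -> (A): if alpha' started strictly before alpha on the v1-side, look at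
   the triangle of T with base [v1; v2] on that side.  Wherever its apex w
   falls, either one of its other sides is a shorter diagonal with the same
   defect, and we descend, or the triangle carries an arrow from S \ S' to
   S /\ S' or from S /\ S' to S' \ S.  The far endpoints are compared by the
   same argument run from v2.
   (A) -> (B): a triangle of T does not cross [v1; v2], so it lies in one of
   the two closed arcs cut off by it; there the nesting of the endpoints of
   alpha and alpha' rules out both arrow patterns. *)

Lemma eq_set2 (T : finType) (a b c d : T) :
  [set a; b] = [set c; d] <-> (a = c /\ b = d) \/ (a = d /\ b = c).
Proof.
split=> [E|[[-> ->]|[-> ->]]] //; last by rewrite setUC.
have /set2P[ac|ad] : a \in [set c; d] by rewrite -E set21.
all: have /set2P[bc|bd] : b \in [set c; d] by rewrite -E set22.
all: have /set2P[ca|cb] : c \in [set a; b] by rewrite E set21.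
all: have /set2P[da|db] : d \in [set a; b] by rewrite E set22.
all: by subst; auto.
Qed.

Section Polygon.
Variable N : nat.
Implicit Types (a b c f o p q u v w x y z : 'I_N) (T : {set {set 'I_N}}).

Lemma cycE o v : cyc o v = if o <= v then v - o else v + N - o.
Proof.
rewrite /cyc; have := ltn_ord o; have := ltn_ord v; case: (leqP o v) => ov ? ?.
- by rewrite -addnBAC // modnDr modn_small //; lia.
- by rewrite modn_small //; lia.
Qed.

Lemma cyc_ltn o v : cyc o v < N.
Proof. by rewrite cycE; have := ltn_ord o; have := ltn_ord v; case: (leqP o v); lia. Qed.

Lemma cycnn o : cyc o o = 0.
Proof. by rewrite cycE leqnn subnn. Qed.

Lemma cyc_inj o : injective (cyc o).
Proof.
move=> u v; rewrite !cycE => E; apply: ord_inj; move: E.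
have := ltn_ord o; have := ltn_ord u; have := ltn_ord v.
by case: (leqP o u); case: (leqP o v); lia.
Qed.

Lemma eq_cyc o x y : (cyc o x == cyc o y) = (x == y).
Proof. exact/inj_eq/cyc_inj. Qed.

Lemma cyc_eq0 o v : (cyc o v == 0) = (v == o).
Proof. by rewrite -(cycnn o) eq_cyc. Qed.

Lemma exists_cyc o k : k < N -> exists v, cyc o v = k.
Proof.
move=> kN; have N_gt0 : 0 < N by lia.
exists (Ordinal (ltn_pmod (o + k) N_gt0)); rewrite cycE /=.
have := ltn_ord o; case: (ltnP (o + k) N) => okN oN.
- by rewrite modn_small // leq_addr; lia.
- by rewrite -(subnK okN) modnDr modn_small; [case: leqP|]; lia.
Qed.

Lemma cyc_rebase o x y :
  cyc x y = if cyc o x <= cyc o y then cyc o y - cyc o x else cyc o y + N - cyc o x.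
Proof.
rewrite !cycE; have := ltn_ord o; have := ltn_ord x; have := ltn_ord y.
by case: (leqP o x); case: (leqP o y); case: (leqP x y); case: ifP; lia.
Qed.

Lemma cyc_rebase_le o x y : cyc o x <= cyc o y -> cyc x y = cyc o y - cyc o x.
Proof. by move=> le_xy; rewrite (cyc_rebase o) le_xy. Qed.

Lemma cyc_rebase_gt o x y : cyc o y < cyc o x -> cyc x y = cyc o y + N - cyc o x.
Proof. by move=> lt_yx; rewrite (cyc_rebase o) leqNgt lt_yx. Qed.

Lemma cyc_le_rev o e p : o != e ->
  (cyc e p <= cyc e o) = (cyc o p == 0) || (cyc o e <= cyc o p).
Proof.
move=> oe; have : cyc o e != 0 by rewrite cyc_eq0 eq_sym.
have := cyc_ltn o p; have := cyc_ltn o e; rewrite (cyc_rebase o e p) (cyc_rebase o e o) cycnn.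
by do ?case: ifP; lia.
Qed.

Definition strictly_between (a b x : nat) : bool := (a < x < b) || (b < x < a).

Definition interleave (a b c f : nat) : bool :=
  [&& c != a, c != b, f != a, f != b & strictly_between a b c (+) strictly_between a b f].

Lemma crossE a b c f : cross [set a; b] [set c; f] = interleave a b c f.
Proof.
rewrite /interleave /strictly_between; apply/idP/idP.
  case/existsP=> a0 /existsP[c0 /existsP[b0 /existsP[f0 /and4P[? ? ?]]]].
  by case/orP=> /andP[/eqP/eq_set2 E /eqP/eq_set2 E'];
    case: E => -[-> ->]; case: E' => -[-> ->]; lia.
wlog lt_ab : a b / a < b => [IH|].
  have [lt_ab|lt_ba|eq_ab] := ltngtP a b; first exact: IH.
    by rewrite setUC => ?; apply: IH => //; lia.
  by rewrite eq_ab; lia.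
wlog lt_cf : c f / c < f => [IH|].
  have [lt_cf|lt_fc|eq_cf] := ltngtP c f; first exact: IH.
    by rewrite [[set c; f]]setUC => ?; apply: IH => //; lia.
  by rewrite eq_cf; lia.
move=> ?; have [?|?] : a < c < b /\ b < f \/ c < a < f /\ f < b by lia.
- apply/existsP; exists a; apply/existsP; exists c; apply/existsP; exists b.
  by apply/existsP; exists f; rewrite !eqxx /=; lia.
- apply/existsP; exists c; apply/existsP; exists a; apply/existsP; exists f.
  by apply/existsP; exists b; rewrite !eqxx orbT /=; lia.
Qed.

Lemma crossC (d e : {set 'I_N}) : cross d e = cross e d.
Proof.
apply: eq_existsb => a; apply: eq_existsb => c; apply: eq_existsb => b.
apply: eq_existsb => f.
by case: (d == [set a; b]); case: (d == [set c; f]); case: (e == [set a; b]);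
  case: (e == [set c; f]); rewrite /= ?andbF ?orbF.
Qed.

Lemma cross_pair d e : cross d e -> exists c f, e = [set c; f].
Proof.
case/existsP=> a /existsP[c /existsP[b /existsP[f /and4P[_ _ _]]]].
by case/orP=> /andP[_ /eqP ->]; [exists c, f | exists a, b].
Qed.

Lemma strictly_between_cyc o a b x : x != a -> x != b ->
  strictly_between (cyc o a) (cyc o b) (cyc o x) =
  strictly_between a b x (+) ((o <= a) != (o <= b)).
Proof.
rewrite -!(inj_eq (@ord_inj N)) /strictly_between !cycE.
have := ltn_ord o; have := ltn_ord a; have := ltn_ord b; have := ltn_ord x.
by case: (leqP o a); case: (leqP o b); case: (leqP o x); lia.
Qed.

Lemma cross_cyc o a b c f :
  cross [set a; b] [set c; f] = interleave (cyc o a) (cyc o b) (cyc o c) (cyc o f).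
Proof.
rewrite crossE /interleave !eq_cyc !(inj_eq (@ord_inj N)).
have [->|ca] := eqVneq c a; first by [].
have [->|cb] := eqVneq c b; first by [].
have [->|fa] := eqVneq f a; first by [].
have [->|fb] := eqVneq f b; first by [].
rewrite !strictly_between_cyc //=.
by case: strictly_between; case: strictly_between; case: (o <= a); case: (o <= b).
Qed.

Lemma cross_at x a c f : cross [set x; a] [set c; f] =
  (0 < cyc x c < cyc x a) && (cyc x a < cyc x f) || (0 < cyc x f < cyc x a) && (cyc x a < cyc x c).
Proof. by rewrite (cross_cyc x) cycnn /interleave /strictly_between; lia. Qed.

Lemma cross_below o p q c f : cyc o p < cyc o f -> cyc o q < cyc o f ->
  cross [set p; q] [set c; f] = strictly_between (cyc o p) (cyc o q) (cyc o c).
Proof. by rewrite (cross_cyc o) /interleave /strictly_between; lia. Qed.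

Lemma cross_orient v1 v2 e : cross [set v1; v2] e ->
  exists u1 u2, [/\ e = [set u1; u2], 0 < cyc v1 u1 < cyc v1 v2 & cyc v1 v2 < cyc v1 u2].
Proof.
move=> cross_e; have [p [q Ee]] := cross_pair cross_e; move: cross_e; rewrite Ee.
rewrite cross_at => /orP[/andP[? ?]|/andP[? ?]]; first by exists p, q.
by exists q, p; rewrite setUC.
Qed.

Lemma cross_orientC v1 v2 u1 u2 : 0 < cyc v1 u1 < cyc v1 v2 -> cyc v1 v2 < cyc v1 u2 ->
  0 < cyc v2 u2 < cyc v2 v1 /\ cyc v2 v1 < cyc v2 u1.
Proof.
have := cyc_ltn v1 u2; rewrite !(cyc_rebase v1 v2) cycnn.
by do ?case: ifP; lia.
Qed.

Lemma adjacent_ncross x y c f : adjacent x y -> ~~ cross [set x; y] [set c; f].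
Proof.
case=> [xy|yx]; last rewrite setUC.
- by rewrite cross_at xy; lia.
- by rewrite cross_at yx; lia.
Qed.

Lemma adjacentC x y : adjacent x y <-> adjacent y x.
Proof. by rewrite /adjacent or_comm. Qed.

Lemma side_or_inC T x y : side_or_in T x y -> side_or_in T y x.
Proof. by case=> [/adjacentC|]; [left|right; rewrite setUC]. Qed.

Lemma triangulation_diag T d : triangulation T -> d \in T ->
  exists a b, [/\ a != b, ~ adjacent a b & d = [set a; b]].
Proof. by case=> diagT _ /diagT[a [b [ab [nadj ->]]]]; exists a, b. Qed.

Lemma triangulation_ncross T d e : triangulation T -> d \in T -> e \in T -> ~~ cross d e.
Proof. by case=> _ [ncrossT _] dT eT; apply/negP; exact: ncrossT. Qed.

Lemma triangulation_pair T u v : triangulation T -> [set u; v] \in T ->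
  u != v /\ ~ adjacent u v.
Proof.
move=> triT /(triangulation_diag triT)[a [b [ab nadj /eq_set2[] [-> ->]]]] //.
by rewrite eq_sym adjacentC.
Qed.

Lemma side_or_in_ncross T e x y : triangulation T -> e \in T -> side_or_in T x y ->
  ~~ cross e [set x; y].
Proof.
move=> triT eT [adj|]; last exact: triangulation_ncross.
have [c [f [_ _ ->]]] := triangulation_diag triT eT.
by rewrite crossC adjacent_ncross.
Qed.

Lemma side_or_in_cross T x y c f : side_or_in T x y -> cross [set x; y] [set c; f] ->
  [set x; y] \in T.
Proof. by case=> // /(adjacent_ncross c f)/negP ncross /ncross. Qed.

Lemma exists_apex T v1 v2 : triangulation T -> [set v1; v2] \in T ->
  exists w, [/\ 0 < cyc v1 w < cyc v1 v2, side_or_in T v1 w & side_or_in T w v2].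
Proof.
move=> triT v12T; have [v12 nadj] := triangulation_pair triT v12T.
have lt1_v2 : 1 < cyc v1 v2.
  have : cyc v1 v2 != 0 by rewrite cyc_eq0 eq_sym.
  have : cyc v1 v2 <> 1 by move=> v2_1; apply: nadj; left.
  lia.
have [w1 w1_1] := exists_cyc v1 (ltn_trans lt1_v2 (cyc_ltn v1 v2)).
(* w is the last vertex before v2 joined to v1; a diagonal of T crossing
   [w; v2] would have to end at v1 and contradict this maximality. *)
pose P w := (0 < cyc v1 w < cyc v1 v2) && ((cyc v1 w == 1) || ([set v1; w] \in T)).
have [|w /andP[w_in side_w] w_max] := @arg_maxnP _ w1 P (cyc v1).
  by rewrite /P w1_1 eqxx lt1_v2.
have side_v1w : side_or_in T v1 w by case/orP: side_w => [/eqP|]; [left; left|right].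
exists w; split=> //.
have [|nT_wv2] := boolP ([set w; v2] \in T); first by right.
have [|nadj_w] := boolP ((cyc w v2 == 1) || (cyc v2 w == 1)).
  by case/orP=> /eqP; left; [left|right].
exfalso; have diag_wv2 : is_diag [set w; v2].
  exists w, v2; split; first by apply: contraTneq w_in => ->; lia.
  by split=> // -[] /eqP; apply/negP; case/norP: nadj_w.
have [_ [_ maximal]] := triT.
have [e eT cross_e] := maximal _ diag_wv2 nT_wv2.
have [p [q [_ _ Ee]]] := triangulation_diag triT eT; subst e.
have ncross_v12 := triangulation_ncross triT v12T eT.
have ncross_v1w : ~~ cross [set p; q] [set v1; w].
  exact: side_or_in_ncross triT eT side_v1w.
have beyond_w s : [set v1; s] \in T -> cyc v1 w < cyc v1 s < cyc v1 v2 -> False.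
  by move=> v1sT s_in; have := w_max s; rewrite /P v1sT orbT andbT; lia.
move: cross_e ncross_v12 ncross_v1w.
rewrite (cross_cyc v1) cross_at (cross_cyc v1) cycnn /interleave /strictly_between => ? ? ?.
have [[p_v1 q_in]|[q_v1 p_in]] : (cyc v1 p == 0) /\ (cyc v1 w < cyc v1 q < cyc v1 v2) \/
                                 (cyc v1 q == 0) /\ (cyc v1 w < cyc v1 p < cyc v1 v2).
  by have := cyc_ltn v1 p; have := cyc_ltn v1 q; lia.
- by rewrite cyc_eq0 in p_v1; rewrite (eqP p_v1) in eT; apply: (beyond_w q).
- by rewrite cyc_eq0 in q_v1; rewrite (eqP q_v1) setUC in eT; apply: (beyond_w p).
Qed.

Lemma in_Supp T al d : (d \in Supp T al) = (d \in T) && cross d al.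
Proof. by rewrite inE. Qed.

Lemma in_SuppT T al d : d \in T -> (d \in Supp T al) = cross d al.
Proof. by move=> dT; rewrite inE dT. Qed.

Lemma arrowI T x y z : triangle_of T x y z -> [set x; y] \in T -> [set x; z] \in T ->
  cyc x y < cyc x z -> arrow T [set x; z] [set x; y].
Proof. by move=> tri xyT xzT lt_yz; split=> //; split=> //; exists x, y, z. Qed.

Definition ccw_config v1 v2 u1 u2 u1' u2' : Prop :=
  [/\ 0 < cyc v1 u1, cyc v1 u1 <= cyc v1 u1', cyc v1 u1' < cyc v1 v2,
      cyc v1 v2 < cyc v1 u2 & cyc v1 u2 <= cyc v1 u2'].

Lemma ccw_configC v1 v2 u1 u2 u1' u2' :
  ccw_config v1 v2 u1 u2 u1' u2' -> ccw_config v2 v1 u2 u1 u2' u1'.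
Proof.
case=> *; have := cyc_ltn v1 u2'.
by split; rewrite !(cyc_rebase v1 v2) ?cycnn; do ?case: ifP; lia.
Qed.

Section ArrowFree.
Variables (T : {set {set 'I_N}}) (al al' : {set 'I_N}).
Hypothesis triT : triangulation T.
Hypothesis no_arrow_out_in :
  forall j i, j \in Supp T al :\: Supp T al' -> i \in Supp T al :&: Supp T al' -> ~ arrow T j i.
Hypothesis no_arrow_in_out :
  forall j i, j \in Supp T al :&: Supp T al' -> i \in Supp T al' :\: Supp T al -> ~ arrow T j i.

Lemma arrow_free_start_le v1 v2 a b a' b' :
  al = [set a; b] -> al' = [set a'; b'] -> [set v1; v2] \in T ->
  0 < cyc v1 a < cyc v1 v2 -> cyc v1 v2 < cyc v1 b ->
  0 < cyc v1 a' < cyc v1 v2 -> cyc v1 v2 < cyc v1 b' ->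
  cyc v1 a <= cyc v1 a'.
Proof.
move=> Eal Eal'; have [m] := ubnP (cyc v1 v2).
elim: m v1 v2 => // m IH v1 v2 lt_m v12T a_in b_out a'_in b'_out.
case: (leqP (cyc v1 a) (cyc v1 a')) => // lt_a'a; exfalso.
have [w [w_in side_v1w side_wv2]] := exists_apex triT v12T.
have v12_S : [set v1; v2] \in Supp T al :&: Supp T al'.
  by apply/setIP; split; rewrite in_Supp v12T ?Eal ?Eal' cross_at; lia.
case: (ltngtP (cyc v1 w) (cyc v1 a)) => [lt_wa|lt_aw|eq_wa].
- have wv2T : [set w; v2] \in T.
    apply: (side_or_in_cross (c := a) (f := b)) => //.
    by rewrite (cross_below (o := v1)) /strictly_between; lia.
  have [lt_wa'|le_a'w] := ltnP (cyc v1 w) (cyc v1 a').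
    have rebase t : cyc v1 w <= cyc v1 t -> cyc w t = cyc v1 t - cyc v1 w.
      exact: cyc_rebase_le.
    suff: cyc w a <= cyc w a' by rewrite !rebase; lia.
    by apply: (IH w v2); rewrite ?rebase //; lia.
  have wv2_S : [set w; v2] \in Supp T al :\: Supp T al'.
    apply/setDP; split; rewrite in_Supp wv2T ?Eal ?Eal' (cross_below (o := v1));
      by rewrite /strictly_between; lia.
  apply: (no_arrow_out_in wv2_S v12_S).
  rewrite [[set v1; v2]]setUC [[set w; v2]]setUC; apply: arrowI; rewrite 1?setUC //.
    split; first by apply/and3P; rewrite -!(eq_cyc v1) cycnn; lia.
    by split; [right; rewrite setUC | | apply: side_or_inC].
  have := cyc_ltn v1 v2.
  by rewrite !(cyc_rebase_gt (o := v1) (x := v2)) ?cycnn; lia.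
- have v1wT : [set v1; w] \in T.
    by apply: (side_or_in_cross (c := a) (f := b)); rewrite // cross_at; lia.
  suff: cyc v1 a <= cyc v1 a' by lia.
  by apply: (IH v1 w) => //; lia.
- have v1wT : [set v1; w] \in T.
    by apply: (side_or_in_cross (c := a') (f := b')); rewrite // cross_at; lia.
  have v1w_S : [set v1; w] \in Supp T al' :\: Supp T al.
    by apply/setDP; split; rewrite in_Supp v1wT ?Eal ?Eal' cross_at; lia.
  apply: (no_arrow_in_out v12_S v1w_S); apply: arrowI => //; last by lia.
  split; first by apply/and3P; rewrite -!(eq_cyc v1) cycnn; lia.
  by split; [| | right].
Qed.

Lemma arrow_free_ccw_config v1 v2 : [set v1; v2] \in T ->
  cross [set v1; v2] al -> cross [set v1; v2] al' ->
  exists u1 u2 u1' u2',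
    [/\ al = [set u1; u2], al' = [set u1'; u2'] & ccw_config v1 v2 u1 u2 u1' u2'].
Proof.
move=> v12T /cross_orient[u1 [u2 [Eal in1 out2]]] /cross_orient[u1' [u2' [Eal' in1' out2']]].
exists u1, u2, u1', u2'; split; [exact: Eal | exact: Eal' |].
have le1 := arrow_free_start_le Eal Eal' v12T in1 out2 in1' out2'.
have le2 : cyc v1 u2 <= cyc v1 u2'.
  have [in2 out1] := cross_orientC in1 out2.
  have [in2' out1'] := cross_orientC in1' out2'.
  rewrite setUC in Eal; rewrite setUC in Eal'; rewrite setUC in v12T.
  have := arrow_free_start_le Eal Eal' v12T in2 out1 in2' out1'.
  by rewrite !(cyc_rebase_le (o := v1) (x := v2)); lia.
by split; lia.
Qed.
End ArrowFree.

Lemma triangle_in_arc T v1 v2 x y z : triangulation T -> [set v1; v2] \in T ->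
  triangle_of T x y z ->
  [/\ cyc v1 x <= cyc v1 v2, cyc v1 y <= cyc v1 v2 & cyc v1 z <= cyc v1 v2] \/
  [/\ cyc v2 x <= cyc v2 v1, cyc v2 y <= cyc v2 v1 & cyc v2 z <= cyc v2 v1].
Proof.
move=> triT v12T [_ [sxy syz sxz]].
suff: [&& cyc v1 x <= cyc v1 v2, cyc v1 y <= cyc v1 v2 & cyc v1 z <= cyc v1 v2] ||
      [&& cyc v2 x <= cyc v2 v1, cyc v2 y <= cyc v2 v1 & cyc v2 z <= cyc v2 v1].
  by case/orP=> /and3P; [left|right].
have [v12 _] := triangulation_pair triT v12T.
have := side_or_in_ncross triT v12T sxy; have := side_or_in_ncross triT v12T syz.
have := side_or_in_ncross triT v12T sxz.
by rewrite !cross_at !(cyc_le_rev (o := v1) (e := v2)) //; lia.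
Qed.

Lemma ccw_config_cross_eq v1 v2 u1 u2 u1' u2' x y z :
  ccw_config v1 v2 u1 u2 u1' u2' ->
  cyc v1 x <= cyc v1 v2 -> cyc v1 y <= cyc v1 v2 -> cyc v1 z <= cyc v1 v2 ->
  cyc x y < cyc x z ->
  cross [set x; z] [set u1; u2] -> cross [set x; y] [set u1'; u2'] ->
  cross [set x; z] [set u1'; u2'] = cross [set x; y] [set u1; u2].
Proof.
case=> ? ? ? ? ? ? ? ?.
rewrite (cyc_rebase v1 x y) (cyc_rebase v1 x z) !(cross_below (o := v1)) /strictly_between; try lia.
by do ?case: ifP; lia.
Qed.

Lemma ccw_config_arrow_free T al al' v1 v2 u1 u2 u1' u2' :
  triangulation T -> al = [set u1; u2] -> al' = [set u1'; u2'] ->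
  [set v1; v2] \in T -> ccw_config v1 v2 u1 u2 u1' u2' ->
  (forall j i, j \in Supp T al :\: Supp T al' -> i \in Supp T al :&: Supp T al' -> ~ arrow T j i) /\
  (forall j i, j \in Supp T al :&: Supp T al' -> i \in Supp T al' :\: Supp T al -> ~ arrow T j i).
Proof.
move=> triT Eal Eal' v12T cfg.
(* Each forbidden arrow pattern makes the two sides of this equation differ. *)
suff cross_eq j i : arrow T j i -> cross j al -> cross i al' -> cross j al' = cross i al.
  split=> j i.
  - move=> /setDP[jS jS'] /setIP[iS iS'] ar; have [iT [jT _]] := ar.
    rewrite (in_SuppT _ jT) in jS; rewrite (in_SuppT _ jT) in jS'.
    rewrite (in_SuppT _ iT) in iS; rewrite (in_SuppT _ iT) in iS'.
    by move: (cross_eq j i ar jS iS'); rewrite (negbTE jS') iS.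
  - move=> /setIP[jS jS'] /setDP[iS' iS] ar; have [iT [jT _]] := ar.
    rewrite (in_SuppT _ jT) in jS; rewrite (in_SuppT _ jT) in jS'.
    rewrite (in_SuppT _ iT) in iS; rewrite (in_SuppT _ iT) in iS'.
    by move: (cross_eq j i ar jS iS'); rewrite jS' (negbTE iS).
case=> _ [_ [x [y [z [tri [-> [-> lt_yz]]]]]]]; rewrite Eal Eal'.
have [[hx hy hz]|[hx hy hz]] := triangle_in_arc triT v12T tri.
  exact: ccw_config_cross_eq cfg hx hy hz lt_yz.
rewrite [[set u1; u2]]setUC [[set u1'; u2']]setUC.
exact: ccw_config_cross_eq (ccw_configC cfg) hx hy hz lt_yz.
Qed.

End Polygon.

Theorem mainTheorem13 (n : nat) (T : {set {set 'I_(n.+3)}})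
  (al al' : {set 'I_(n.+3)}) :
  triangulation T -> positive_root T al -> positive_root T al' ->
  let S := Supp T al in let S' := Supp T al' in
  (exists i, i \in S :&: S' /\
     exists v1 v2 u1 u2 u1' u2' : 'I_(n.+3),
       [/\ i = [set v1; v2], al = [set u1; u2], al' = [set u1'; u2'] &
           [/\ 0 < cyc v1 u1, cyc v1 u1 <= cyc v1 u1',
               cyc v1 u1' < cyc v1 v2, cyc v1 v2 < cyc v1 u2
             & cyc v1 u2 <= cyc v1 u2']])
  <->
  [/\ S :&: S' != set0,
      (forall j i, j \in S :\: S' -> i \in S :&: S' -> ~ arrow T j i)
    & (forall j i, j \in S :&: S' -> i \in S' :\: S -> ~ arrow T j i)].
Proof.
move=> triT _ _ S S'; split.
- case=> i [iSS' [v1 [v2 [u1 [u2 [u1' [u2' [Ei Eu Eu' cfg]]]]]]]].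
  have /setIP[iS _] := iSS'; rewrite in_Supp Ei in iS; case/andP: iS => v12T _.
  have [no_out_in no_in_out] := ccw_config_arrow_free triT Eu Eu' v12T cfg.
  by split; [apply/set0Pn; exists i | exact: no_out_in | exact: no_in_out].
case=> /set0Pn[i iSS'] no_out_in no_in_out; have /setIP[iS iS'] := iSS'.
rewrite in_Supp in iS; rewrite in_Supp in iS'.
case/andP: iS => iT i_al; case/andP: iS' => _ i_al'.
have [v1 [v2 [_ _ Ei]]] := triangulation_diag triT iT.
rewrite Ei in iT i_al i_al'.
have [u1 [u2 [u1' [u2' [Eu Eu' cfg]]]]] :=
  arrow_free_ccw_config triT no_out_in no_in_out iT i_al i_al'.
exists i; split; first exact: iSS'.
by exists v1, v2, u1, u2, u1', u2'; split; [exact: Ei | exact: Eu | exact: Eu' | exact: cfg].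
Qed.
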